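(* Let $m,n\ge 3$ and let $v$ be any vertex of $\mathcal{C}^3_{m,n}$. Then, with $\mathcal{C}^3_{m,n}-v$ denoting the strong deletion of $v$, \[ \mathcal{E_S}(\mathcal{C}^3_{m,n})>\mathcal{E_S}(\mathcal{C}^3_{m,n}-v). \]
   Context: For a hypergraph $\mathcal{H}$ and distinct vertices $i,j$, the co-degree $c_{ij}$ is the number of hyperedges containing both $i$ and $j$. The Seidel matrix $\mathcal{S}(\mathcal{H})$ has zero diagonal and $(i,j)$-entry $1-2c_{ij}$ for $i\neq j$; the Seidel energy $\mathcal{E_S}(\mathcal{H})$ is the sum of the absolute values of its eigenvalues. The complete $3$-uniform bipartite hypergraph $\mathcal{C}^3_{m,n}$ has vertex set $V_1\sqcup V_2$, $|V_1|=m$, $|V_2|=n$, and hyperedge set all $3$-subsets meeting both $V_1$ and $V_2$. The strong deletion $\mathcal{H}-v$ of a vertex $v$ is the hypergraph with vertex set $V(\mathcal{H})\setminus\{v\}$ and hyperedge set $\{e\in E(\mathcal{H}): v\notin e\}$. *)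

From HB Require Import structures.
From mathcomp Require Import all_boot all_order all_algebra all_field.
Set Implicit Arguments. Unset Strict Implicit. Unset Printing Implicit Defensive.
Import Order.TTheory GRing.Theory Num.Theory.
Local Open Scope ring_scope.

Record hypergraph (T : finType) := Hypergraph {
  hverts : {set T};
  hedges : {set {set T}} }.

Definition codeg (T : finType) (H : hypergraph T) (i j : T) : nat :=
  #|[set e in hedges H | (i \in e) && (j \in e)]|.

Definition seidel (T : finType) (H : hypergraph T) :
  'M[algC]_(#|hverts H|) :=
  \matrix_(i, j) (if i == j then 0
                  else 1 - 2 * (codeg H (enum_val i) (enum_val j))%:R).

(* The eigenvalues (with multiplicity) of a square complex matrix:
   the roots of its characteristic polynomial. *)
Definition eigenvalues (k : nat) (A : 'M[algC]_k) : seq algC :=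
  sval (closed_field_poly_normal (char_poly A)).

Definition seidel_energy (T : finType) (H : hypergraph T) : algC :=
  \sum_(z <- eigenvalues (seidel H)) `|z|.

Definition strong_delete (T : finType) (H : hypergraph T) (v : T) :
  hypergraph T :=
  Hypergraph (hverts H :\ v) [set e in hedges H | v \notin e].

(* complete 3-uniform bipartite hypergraph C^3_{m,n} on 'I_(m+n):
   V1 = {i | i < m}, V2 = {i | m <= i}. *)
Definition complete_bip3 (m n : nat) : hypergraph 'I_(m + n) :=
  Hypergraph [set: 'I_(m + n)]
    [set e : {set 'I_(m + n)} | [&& #|e| == 3%N,
        [exists x in e, (x < m)%N] & [exists x in e, (m <= x)%N]]].

From HB Require Import structures.
From mathcomp Require Import all_boot all_order all_algebra all_field.
From mathcomp Require Import ring zify.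
Set Implicit Arguments. Unset Strict Implicit. Unset Printing Implicit Defensive.
Import Order.TTheory GRing.Theory Num.Theory.
Local Open Scope ring_scope.

(* Within a vertex set having [K] vertices in the first part and [L] in the second,
   the co-degree of two vertices of [C^3_{m,n}] only depends on whether they lie in
   the same part, so the Seidel matrix is a two-class matrix: constant entries
   [1 - 2L] and [1 - 2K] within the parts and [5 - 2K - 2L] across.  Such a matrix
   is a rank-two perturbation of a diagonal one, and its spectrum yields the closed
   form [bip3_energy K L] of the Seidel energy.  A strong deletion of a vertex gives
   the same kind of hypergraph with one part smaller by one, and the closed form is
   strictly increasing in each of [K] and [L]. *)

Lemma det_sylvester (R : comNzRingType) n q (A : 'M[R]_(n, q)) (B : 'M[R]_(q, n)) :
  \det (1%:M + A *m B) = \det (1%:M + B *m A).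
Proof.
have M_left : block_mx 1%:M (- A) B 1%:M =
    block_mx 1%:M 0 B 1%:M *m block_mx 1%:M (- A) 0 (1%:M + B *m A).
  rewrite mulmx_block ?mul1mx ?mul0mx ?mulmx0 ?mulmx1 ?addr0 ?add0r mulmxN.
  by rewrite addrCA addNr addr0.
have M_right : block_mx 1%:M (- A) B 1%:M =
    block_mx (1%:M + A *m B) (- A) 0 1%:M *m block_mx 1%:M 0 B 1%:M.
  by rewrite mulmx_block ?mul1mx ?mul0mx ?mulmx0 ?mulmx1 ?addr0 ?add0r mulNmx addrK.
have := congr1 determinant M_left; rewrite M_right !det_mulmx.
by rewrite !det_lblock !det_ublock !det1 ?mul1r ?mulr1.
Qed.

Lemma det_mx22 (R : comNzRingType) (M : 'M[R]_2) :
  \det M = M 0 0 * M 1 1 - M 0 1 * M 1 0.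
Proof.
rewrite (expand_det_row _ 0) !big_ord_recl big_ord0 addr0 /cofactor !det_mx11.
rewrite !mxE /= expr0 expr1 !mul1r mulN1r mulrN.
by congr (M _ _ * M _ _ - M _ _ * M _ _); apply: val_inj.
Qed.

Lemma horner_char_poly (R : comNzRingType) n (A : 'M[R]_n) x :
  (char_poly A).[x] = \det (x%:M - A).
Proof.
rewrite /char_poly -[_.[x]]/(horner_eval x _) -det_map_mx; congr (\det _).
by apply/matrixP => i j; rewrite !mxE rmorphB rmorphMn /= /horner_eval hornerX hornerC.
Qed.

Lemma sumr_const_on (R : nmodType) (I : finType) (P : pred I) (u v : R) (F : I -> R) :
  (forall i, P i -> F i = u) -> (forall i, ~~ P i -> F i = v) ->
  \sum_i F i = u *+ #|P| + v *+ #|predC P|.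
Proof.
move=> Fu Fv; rewrite (bigID P) /= -!sumr_const.
by congr (_ + _); apply: eq_bigr.
Qed.

Lemma prodr_const_on (R : comNzRingType) (I : finType) (P : pred I) (u v : R) (F : I -> R) :
  (forall i, P i -> F i = u) -> (forall i, ~~ P i -> F i = v) ->
  \prod_i F i = u ^+ #|P| * v ^+ #|predC P|.
Proof.
move=> Fu Fv; rewrite (bigID P) /= -!prodr_const.
by congr (_ * _); apply: eq_bigr.
Qed.

Definition twoclass_mx (R : zmodType) N (p : pred 'I_N) (a b c : R) : 'M[R]_N :=
  \matrix_(i, j) if i == j then 0 else if p i == p j then (if p i then a else b) else c.

(* [x - A] factors as [D (1 + U V)] with [D] diagonal and [U V] of rank 2, so
   Sylvester's identity reduces the determinant to a 2 x 2 one. *)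
Lemma det_twoclass_mx (F : fieldType) N (p : pred 'I_N) (a b c x : F) :
  x + a != 0 -> x + b != 0 -> (0 < #|p|)%N -> (0 < #|predC p|)%N ->
  \det (x%:M - twoclass_mx p a b c) =
    (x + a) ^+ #|p|.-1 * (x + b) ^+ #|predC p|.-1 *
    ((x - a * (#|p|.-1)%:R) * (x - b * (#|predC p|.-1)%:R)
     - c ^+ 2 * #|p|%:R * #|predC p|%:R).
Proof.
move=> xa_neq0 xb_neq0 p_gt0 pC_gt0.
pose d : 'rV[F]_N := \row_i (if p i then x + a else x + b).
have d_neq0 i : d 0 i != 0 by rewrite mxE; case: (p i).
pose U : 'M[F]_(N, 2) :=
  \matrix_(i, w) (- (d 0 i)^-1 * (if w == 0 then p i else ~~ p i)%:R).
pose V : 'M[F]_(2, N) :=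
  \matrix_(w, j) if w == 0 then (if p j then a else c) else (if p j then c else b).
have factor : x%:M - twoclass_mx p a b c = diag_mx d *m (1%:M + U *m V).
  apply/matrixP => i j; rewrite mul_diag_mx !mxE big_ord_recl big_ord1 !mxE /=.
  have := d_neq0 i; rewrite mxE.
  by case: (eqVneq i j) => [<-|_]; case: (p i); case: (p j) => /= d_i_neq0; field.
have VU00 : \sum_j V 0 j * U j 0 = - (a / (x + a)) * #|p|%:R.
  rewrite (sumr_const_on (P := p) (u := - (a / (x + a))) (v := 0)) => [|j pj|j pj];
    by rewrite ?mul0rn ?addr0 ?mulr_natr //
       !mxE /= ?pj ?(negbTE pj) /= ?mulr1 ?mulr0 ?mulrN.
have VU01 : \sum_j V 0 j * U j 1 = - (c / (x + b)) * #|predC p|%:R.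
  rewrite (sumr_const_on (P := p) (u := 0) (v := - (c / (x + b)))) => [|j pj|j pj];
    by rewrite ?mul0rn ?add0r ?mulr_natr //
       !mxE /= ?pj ?(negbTE pj) /= ?mulr1 ?mulr0 ?mulrN.
have VU10 : \sum_j V 1 j * U j 0 = - (c / (x + a)) * #|p|%:R.
  rewrite (sumr_const_on (P := p) (u := - (c / (x + a))) (v := 0)) => [|j pj|j pj];
    by rewrite ?mul0rn ?addr0 ?mulr_natr //
       !mxE /= ?pj ?(negbTE pj) /= ?mulr1 ?mulr0 ?mulrN.
have VU11 : \sum_j V 1 j * U j 1 = - (b / (x + b)) * #|predC p|%:R.
  rewrite (sumr_const_on (P := p) (u := 0) (v := - (b / (x + b)))) => [|j pj|j pj];
    by rewrite ?mul0rn ?add0r ?mulr_natr //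
       !mxE /= ?pj ?(negbTE pj) /= ?mulr1 ?mulr0 ?mulrN.
rewrite factor det_mulmx det_diag det_sylvester det_mx22.
rewrite (prodr_const_on (P := p) (u := x + a) (v := x + b)); last 2 first.
- by move=> i pi; rewrite mxE pi.
- by move=> i /negbTE pi; rewrite mxE pi.
rewrite !mxE /= VU00 VU01 VU10 VU11.
move: p_gt0 pC_gt0; case: #|p| => [//|k] _; case: #|predC p| => [//|l] _ /=.
rewrite !exprS -!natr1 !add0r.
by field; rewrite xa_neq0 xb_neq0.
Qed.

(* Both sides are monic of degree [N]; they agree at the [N + 1] points
   [- (|a| + |b| + 1 + j)], which stay away from the poles [- a] and [- b] of the
   determinant formula. *)
Lemma char_twoclass_mx (R : numFieldType) N (p : pred 'I_N) (a b c l1 l2 : R) :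
  (0 < #|p|)%N -> (0 < #|predC p|)%N ->
  l1 + l2 = a * (#|p|.-1)%:R + b * (#|predC p|.-1)%:R ->
  l1 * l2 = a * b * (#|p|.-1)%:R * (#|predC p|.-1)%:R
            - c ^+ 2 * #|p|%:R * #|predC p|%:R ->
  char_poly (twoclass_mx p a b c) =
  \prod_(z <- nseq #|p|.-1 (- a) ++ nseq #|predC p|.-1 (- b) ++ [:: l1; l2])
     ('X - z%:P).
Proof.
move=> p_gt0 pC_gt0 sum_l prod_l.
pose s := `|a| + `|b| + 1.
pose xs := [seq - (s + j%:R) | j <- iota 0 N.+1].
have xs_far x y : x \in xs -> `|y| <= `|a| + `|b| -> x + y != 0.
  case/mapP => j _ -> y_small; rewrite -normr_gt0; apply: lt_le_trans (lerB_normD _ _).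
  rewrite normrN ger0_norm ?subr_gt0; last by rewrite addr_ge0 ?ler0n ?addr_ge0.
  by apply: le_lt_trans y_small _; rewrite -addrA ltrDl ltr_wpDr ?ler0n.
apply/eqP; rewrite -subr_eq0; apply/eqP; apply: (roots_geq_poly_eq0 (rs := xs)).
- apply/allP => x x_xs; rewrite /root hornerD hornerN horner_char_poly.
  rewrite det_twoclass_mx ?xs_far ?lerDl ?lerDr ?normr_ge0 //.
  rewrite horner_prod !big_cat /= !big_nseq !iter_mulr !mulr1.
  rewrite !big_cons big_nil mulr1 !hornerXsubC !opprK.
  have -> : (x - l1) * (x - l2) = x ^+ 2 - (l1 + l2) * x + l1 * l2 by ring.
  by rewrite sum_l prod_l; apply/eqP; ring.
- rewrite map_inj_uniq ?iota_uniq // => i j /oppr_inj /addrI /eqP.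
  by rewrite eqr_nat => /eqP.
- rewrite size_map size_iota (leq_trans (size_polyD _ _)) // size_polyN.
  rewrite size_char_poly size_prod_XsubC !size_cat !size_nseq /= geq_max leqnn /=.
  have card_split : (#|p| + #|predC p| = N)%N by rewrite cardC card_ord.
  by move: card_split p_gt0 pC_gt0; lia.
Qed.

Lemma eigenvalues_perm N (A : 'M[algC]_N) (s : seq algC) :
  char_poly A = \prod_(z <- s) ('X - z%:P) -> perm_eq (eigenvalues A) s.
Proof.
move=> charA; rewrite /eigenvalues; case: closed_field_poly_normal => t /= charAt.
by apply: prod_XsubC_eq; rewrite -charA {1}charAt (monicP (char_poly_monic A)) scale1r.
Qed.

Lemma norm_quadratic_roots (C : numClosedFieldType) (T D : C) :
  T \is Num.real -> D <= 0 ->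
  `|(T + sqrtC (T ^+ 2 - 4 * D)) / 2| + `|(T - sqrtC (T ^+ 2 - 4 * D)) / 2|
    = sqrtC (T ^+ 2 - 4 * D).
Proof.
move=> T_real D_le0; set r := sqrtC _.
have T2E : T ^+ 2 = `|T| ^+ 2 by rewrite real_normK.
have disc_ge0 : 0 <= T ^+ 2 - 4 * D.
  by rewrite T2E addr_ge0 ?exprn_ge0 // oppr_ge0 mulr_ge0_le0.
have normT_le_r : `|T| <= r.
  rewrite -(sqrCK (normr_ge0 T)) ler_sqrtC ?nnegrE ?exprn_ge0 // -T2E.
  by rewrite lerDl oppr_ge0 mulr_ge0_le0.
have /andP [rT Tr] : - r <= T <= r by rewrite -real_ler_norml.
have Tr_ge0 : 0 <= T + r by rewrite -[r]opprK subr_ge0.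
have Tr_le0 : T - r <= 0 by rewrite subr_le0.
by rewrite ger0_norm ?divr_ge0 // ler0_norm ?mulr_le0_ge0 ?invr_ge0 //; field.
Qed.

Definition bip3_disc (K L : nat) : int :=
  (K%:Z - L%:Z) ^+ 2 + 4 * K%:Z * L%:Z * (2 * K%:Z + 2 * L%:Z - 5) ^+ 2.

Definition bip3_trace (K L : nat) : algC :=
  (1 - 2 * L%:R) * (K%:R - 1) + (1 - 2 * K%:R) * (L%:R - 1).

Definition bip3_det (K L : nat) : algC :=
  (1 - 2 * L%:R) * (1 - 2 * K%:R) * (K%:R - 1) * (L%:R - 1)
  - (5 - 2 * K%:R - 2 * L%:R) ^+ 2 * K%:R * L%:R.

Lemma bip3_discE K L :
  bip3_trace K L ^+ 2 - 4 * bip3_det K L = (bip3_disc K L)%:~R.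
Proof.
rewrite /bip3_trace /bip3_det /bip3_disc.
by rewrite !(rmorphB, rmorphD, rmorphM, rmorphXn) /= -!pmulrn; ring.
Qed.

Lemma bip3_det_le0 K L : (0 < K)%N -> (0 < L)%N -> bip3_det K L <= 0.
Proof.
case: K => // K _; case: L => // L _.
have -> : bip3_det K.+1 L.+1 = ((2 * L%:Z + 1) * (2 * K%:Z + 1) * K%:Z * L%:Z
    - (2 * K%:Z + 2 * L%:Z - 1) ^+ 2 * (K%:Z + 1) * (L%:Z + 1))%:~R.
  rewrite /bip3_det !(rmorphB, rmorphD, rmorphM, rmorphXn) /= -!pmulrn -!natr1.
  ring.
by rewrite lerz0; nia.
Qed.

(* For parts of sizes [K, L >= 1] the spectrum consists of [2L - 1] and [2K - 1]
   with multiplicities [K - 1] and [L - 1], and of the two roots of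
   [X^2 - bip3_trace K L * X + bip3_det K L]; these have opposite signs, so their
   absolute values add up to the square root of the discriminant [bip3_disc K L]. *)
Definition bip3_energy (K L : nat) : algC :=
  (K.-1 * (2 * L).-1 + L.-1 * (2 * K).-1)%:R + sqrtC (bip3_disc K L)%:~R.

Lemma bip3_energyC K L : bip3_energy K L = bip3_energy L K.
Proof. by rewrite /bip3_energy addnC /bip3_disc; congr (_ + sqrtC _%:~R); ring. Qed.

Lemma bip3_disc_ge0 K L : 0 <= bip3_disc K L.
Proof. by apply: addr_ge0; rewrite ?sqr_ge0 // mulr_ge0 ?sqr_ge0. Qed.

Lemma bip3_disc_leS K L : (0 < K)%N -> (0 < L)%N -> bip3_disc K L <= bip3_disc K.+1 L.
Proof. rewrite /bip3_disc => K_gt0 L_gt0; rewrite intS; nia. Qed.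

Lemma bip3_energy_pred_lt K L : (1 < K)%N -> (0 < L)%N ->
  bip3_energy K.-1 L < bip3_energy K L.
Proof.
case: K => // K; rewrite ltnS => K_gt0 L_gt0 /=; apply: ltr_leD.
  by rewrite ltr_nat; case: K K_gt0 => // K _; case: L L_gt0 => // L _; nia.
by rewrite ler_sqrtC ?nnegrE ?ler0z ?bip3_disc_ge0 // ler_int bip3_disc_leS.
Qed.

Lemma norm_1sub2n n : (0 < n)%N -> `|1 - 2 * n%:R| = (2 * n).-1%:R :> algC.
Proof.
case: n => // n _; rewrite mulnS /=.
have -> : 1 - 2 * n.+1%:R = - (2 * n).+1%:R :> algC by rewrite -!natr1 natrM; ring.
by rewrite normrN normr_nat.
Qed.

Lemma energy_twoclass_mx N (p : pred 'I_N) (a b c T D : algC) :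
  (0 < #|p|)%N -> (0 < #|predC p|)%N ->
  T = a * #|p|.-1%:R + b * #|predC p|.-1%:R ->
  D = a * b * #|p|.-1%:R * #|predC p|.-1%:R - c ^+ 2 * #|p|%:R * #|predC p|%:R ->
  T \is Num.real -> D <= 0 ->
  \sum_(z <- eigenvalues (twoclass_mx p a b c)) `|z|
    = `|a| *+ #|p|.-1 + `|b| *+ #|predC p|.-1 + sqrtC (T ^+ 2 - 4 * D).
Proof.
move=> p_gt0 pC_gt0 TE DE T_real D_le0.
have rootsM r : (T + r) / 2 * ((T - r) / 2) = (T ^+ 2 - r ^+ 2) / 4 by field.
rewrite (perm_big _ (eigenvalues_perm (char_twoclass_mx
  (l1 := (T + sqrtC (T ^+ 2 - 4 * D)) / 2) (l2 := (T - sqrtC (T ^+ 2 - 4 * D)) / 2)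
  (c := c) p_gt0 pC_gt0 _ _))); last 2 first.
- by rewrite -TE; field.
- by rewrite rootsM sqrtCK -DE; field.
rewrite !big_cat /= !big_nseq !iter_addr !addr0 !big_cons big_nil addr0.
by rewrite -addrA norm_quadratic_roots // !normrN addrA.
Qed.

Lemma energy_twoclass_bip3 N (p : pred 'I_N) (K L : nat) :
  #|p| = K -> #|predC p| = L -> (0 < K)%N -> (0 < L)%N ->
  \sum_(z <- eigenvalues
          (twoclass_mx p (1 - 2 * L%:R) (1 - 2 * K%:R) (5 - 2 * K%:R - 2 * L%:R)))
     `|z| = bip3_energy K L.
Proof.
move=> cardp cardpC K_gt0 L_gt0.
have predE n : (0 < n)%N -> n.-1%:R = n%:R - 1 :> algC.
  by case: n => // n _; rewrite -natr1 addrK.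
rewrite (@energy_twoclass_mx _ _ _ _ _ (bip3_trace K L) (bip3_det K L)) ?cardp ?cardpC //.
- rewrite bip3_discE !norm_1sub2n //.
  by rewrite /bip3_energy natrD !natrM !mulr_natl.
- by rewrite !predE // /bip3_trace.
- by rewrite !predE // /bip3_det.
- rewrite /bip3_trace.
  by do !(apply: realB || apply: realD || apply: realM || apply: realn || apply: real1).
- exact: bip3_det_le0.
Qed.

Definition part_size (T : finType) (Q : pred T) (H : hypergraph T) : nat :=
  #|[set x in hverts H | Q x]|.

Lemma part_size_delete (T : finType) (Q : pred T) (H : hypergraph T) v :
  v \in hverts H -> part_size Q (strong_delete H v) = (part_size Q H - Q v)%N.
Proof.
move=> vH; rewrite /part_size /= (cardsD1 v [set x in hverts H | Q x]) inE vH /=.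
have -> : [set x in hverts H :\ v | Q x] = [set x in hverts H | Q x] :\ v.
  by apply/setP => x; rewrite !inE andbA.
by case: (Q v); rewrite ?add1n ?add0n ?subn1 ?subn0.
Qed.

Lemma card_enum_val (T : finType) (A : {set T}) (q : pred 'I_#|A|) (Q : pred T) :
  (forall i, q i = Q (enum_val i)) -> #|q| = #|[set x in A | Q x]|.
Proof.
move=> qE; have -> : [set x in A | Q x] = enum_val @: [set i | q i].
  apply/setP => x; rewrite inE; apply/andP/imsetP.
  - by case=> xA Qx; exists (enum_rank_in xA x); rewrite ?inE ?qE enum_rankK_in.
  - by case=> i; rewrite inE qE => Qi ->; rewrite enum_valP.
by rewrite card_imset; [apply: eq_card => i; rewrite inE | apply: enum_val_inj].
Qed.

Lemma part_sizeC (T : finType) (Q : pred T) (H : hypergraph T) :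
  (part_size Q H + part_size (predC Q) H)%N = #|hverts H|.
Proof.
rewrite /part_size -(cardsID [set x | Q x] (hverts H)) setIdE.
by congr (_ + _)%N; apply: eq_card => x; rewrite !inE andbC.
Qed.

Lemma exists_in_set3 (T : finType) (Q : pred T) x y z :
  [exists u in [set x; y; z], Q u] = [|| Q x, Q y | Q z].
Proof.
apply/existsP/or3P => [[u /andP [+ Qu]] | ].
  rewrite !inE => /orP [/orP [] | ] /eqP uE; rewrite -uE.
  - by constructor 1.
  - by constructor 2.
  - by constructor 3.
by case=> Qu; [exists x | exists y | exists z]; rewrite !inE eqxx ?orbT.
Qed.

Section CompleteBip3.
Variables (T : finType) (P : pred T).

Definition is_complete_bip3 (H : hypergraph T) : Prop :=
  forall e, (e \in hedges H) = [&& #|e| == 3%N, e \subset hverts H,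
                                   [exists x in e, P x] & [exists x in e, ~~ P x]].

Lemma is_complete_bip3_delete H v :
  is_complete_bip3 H -> is_complete_bip3 (strong_delete H v).
Proof.
move=> HE e; rewrite /= inE HE subsetD1.
by case: (v \in e); rewrite /= ?andbF ?andbT.
Qed.

Variables (H : hypergraph T).
Hypothesis HE : is_complete_bip3 H.
Let W := hverts H.

Definition thirds (x y : T) : {set T} :=
  [set z in W :\ x :\ y | [|| P x, P y | P z] && [|| ~~ P x, ~~ P y | ~~ P z]].

Lemma edges_through x y : x \in W -> y \in W -> x != y ->
  [set e in hedges H | (x \in e) && (y \in e)] = (fun z => [set x; y; z]) @: thirds x y.
Proof.
move=> xW yW xy; apply/setP => e; rewrite inE HE.
apply/idP/imsetP.
- case/and3P => /and4P [/eqP e3 eW ePx eNPx] xe ye.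
  have ye' : y \in e :\ x by rewrite !inE eq_sym xy.
  have /cards1P [z exy] : #|e :\ x :\ y| == 1%N.
    have : #|e| = (#|e :\ x :\ y|).+2.
      by rewrite (cardsD1 x) xe (cardsD1 y (e :\ x)) ye'.
    by rewrite e3 => -[<-].
  have : z \in e :\ x :\ y by rewrite exy set11.
  rewrite !inE => /and3P [zy zx ze].
  have eE : e = [set x; y; z].
    apply/setP => w; rewrite !inE; case: (eqVneq w x) => [->|wx] //=.
    case: (eqVneq w y) => [->|wy] //=.
    have : (w \in e :\ x :\ y) = (w \in e) by rewrite !inE wx wy.
    by rewrite exy inE => <-.
  exists z => //; rewrite !inE zx zy (subsetP eW) //=.
  by move: ePx eNPx; rewrite eE !exists_in_set3 => -> ->.
- case=> z; rewrite !inE => /andP [/and3P [zy zx zW] /andP [ePx eNPx]] ->.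
  rewrite !inE !eqxx ?orbT /= andbT !exists_in_set3 ePx eNPx !subUset !sub1set xW yW zW.
  by rewrite setUC cardsU1 cards2 !inE negb_or xy zx zy.
Qed.

Lemma codeg_thirds x y : x \in W -> y \in W -> x != y -> codeg H x y = #|thirds x y|.
Proof.
move=> xW yW xy; rewrite /codeg edges_through // card_in_imset // => z1 z2 z1t _ e12.
have : z1 \in [set x; y; z2] by rewrite -e12 !inE eqxx orbT.
move: z1t; rewrite !inE => /andP [/and3P [z1y z1x _] _].
by rewrite (negbTE z1x) (negbTE z1y) => /eqP.
Qed.

Lemma thirds_same x y : P x = P y -> thirds x y = [set z in W | P z != P x].
Proof.
move=> Pxy; apply/setP => z; rewrite !inE -Pxy.
case: (eqVneq z x) => [->|zx]; first by rewrite eqxx /= !andbF.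
case: (eqVneq z y) => [->|zy]; first by rewrite -Pxy eqxx /= !andbF.
by case: (P x); case: (P z); rewrite /= ?andbF ?andbT.
Qed.

Lemma thirds_mixed x y : P x != P y -> thirds x y = W :\ x :\ y.
Proof.
move=> Pxy; apply/setP => z; rewrite !inE.
by case: (P x) (P y) Pxy => -[] //= _; rewrite ?orbT ?andbT.
Qed.

Let K := part_size P H.
Let L := part_size (predC P) H.

(* Co-degrees are [L] inside the first part, [K] inside the second and [K + L - 2]
   across. *)
Lemma seidel_bip3 : seidel H =
  twoclass_mx (fun i => P (enum_val i)) (1 - 2 * L%:R) (1 - 2 * K%:R)
              (5 - 2 * K%:R - 2 * L%:R).
Proof.
apply/matrixP => i j; rewrite !mxE; case: eqVneq => // ij.
have xy : enum_val i != enum_val j by rewrite (inj_eq enum_val_inj).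
rewrite codeg_thirds ?enum_valP //.
case: (eqVneq (P (enum_val i)) (P (enum_val j))) => [Pij|Pij].
  rewrite thirds_same //; case: (P (enum_val i)); congr (1 - 2 * _%:R);
    by apply: eq_card => z; rewrite !inE; case: (P z).
rewrite thirds_mixed //.
have cardW : (#|W :\ enum_val i :\ enum_val j| + 2)%N = (K + L)%N.
  rewrite part_sizeC (cardsD1 (enum_val i) W) enum_valP.
  by rewrite (cardsD1 (enum_val j) (W :\ _)) !inE eq_sym xy enum_valP addn2.
have -> : #|W :\ enum_val i :\ enum_val j|%:R = K%:R + L%:R - 2 :> algC.
  by rewrite -natrD -cardW natrD addrK.
by ring.
Qed.

Lemma seidel_energy_bip3 : (0 < K)%N -> (0 < L)%N -> seidel_energy H = bip3_energy K L.
Proof.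
move=> K_gt0 L_gt0; rewrite /seidel_energy seidel_bip3.
by apply: energy_twoclass_bip3 => //; apply: card_enum_val.
Qed.

End CompleteBip3.

Lemma complete_bip3P m n :
  is_complete_bip3 (fun x : 'I_(m + n) => (x < m)%N) (complete_bip3 m n).
Proof.
move=> e; rewrite inE subsetT /=; do 2 congr (_ && _).
by apply: eq_existsb => x; rewrite leqNgt.
Qed.

Lemma part_size_bip3 m n :
  part_size (fun x : 'I_(m + n) => (x < m)%N) (complete_bip3 m n) = m.
Proof.
rewrite /part_size.
have -> : [set x in hverts (complete_bip3 m n) | (x < m)%N] = lshift n @: setT.
  apply/setP => x; rewrite !inE; apply/idP/imsetP => [x_lt_m | [y _ ->]].
    by exists (Ordinal x_lt_m) => //; apply: val_inj.
  by rewrite /=.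
by rewrite card_imset ?cardsT ?card_ord //; apply: lshift_inj.
Qed.

Lemma part_sizeC_bip3 m n :
  part_size (predC (fun x : 'I_(m + n) => (x < m)%N)) (complete_bip3 m n) = n.
Proof.
by apply/eqP; rewrite -(eqn_add2l m) -{1}(@part_size_bip3 m n) part_sizeC cardsT card_ord.
Qed.

Theorem corollary3p6 (m n : nat) (hm : (3 <= m)%N) (hn : (3 <= n)%N)
    (v : 'I_(m + n)) :
  seidel_energy (strong_delete (complete_bip3 m n) v)
    < seidel_energy (complete_bip3 m n).
Proof.
have bipC := @complete_bip3P m n.
have vC : v \in hverts (complete_bip3 m n) by rewrite inE.
rewrite (seidel_energy_bip3 bipC) ?part_size_bip3 ?part_sizeC_bip3; try lia.
rewrite (seidel_energy_bip3 (is_complete_bip3_delete v bipC)) !part_size_delete //;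
  rewrite ?part_size_bip3 ?part_sizeC_bip3 /=; try by case: (v < m)%N; lia.
case: (v < m)%N; rewrite /= subn0 subn1.
  by apply: bip3_energy_pred_lt; lia.
by rewrite bip3_energyC [X in _ < X]bip3_energyC; apply: bip3_energy_pred_lt; lia.
Qed.
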